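(* Let $G$ be a finite soluble non-nilpotent group. Then $G\in\mathfrak{Y}_n$ if and only if $G$ splits as a semidirect product $G=\langle x\rangle\ltimes A$, where $\langle x\rangle$ is a $p$-group for some prime $p$, $A$ is an abelian $p'$-group, $x^p$ is central in $G$, and $x$ acts fixed point freely on $A$.
   Context: $\mathfrak{Y}_n$ denotes the class of all groups $G$ such that $N_G(A)=A$ for every non-abelian subgroup $A\le G$. A $p'$-group is a group whose order is coprime to $p$. ''$x$ acts fixed point freely on $A$'' means the only $a\in A$ with $a^x=a$ is the identity. *)

From mathcomp Require Import all_boot all_fingroup all_solvable.
Set Implicit Arguments. Unset Strict Implicit. Unset Printing Implicit Defensive.
Local Open Scope group_scope.

Definition Yn (gT : finGroupType) (G : {group gT}) : Prop :=
  forall A : {group gT}, A \subset G -> ~~ abelian A -> 'N_G(A) = A.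

From mathcomp Require Import all_boot all_fingroup all_solvable.
Set Implicit Arguments. Unset Strict Implicit. Unset Printing Implicit Defensive.
Local Open Scope group_scope.

(* In a Y_n-group every proper normal subgroup is abelian, so G^`(1) is abelian.
   If P is a non-normal Sylow p-subgroup, then P * G^`(1) = G and P complements
   A := 'O_p^'(G^`(1)); any x in P not centralizing A generates P, since an element
   normalizing <[x]> also normalizes the non-abelian, hence self-normalizing,
   A <*> <[x]>.  The same argument applied to <[x ^+ p]> shows that x ^+ p
   centralizes A, and [~: A, <[x]>] <*> <[x]> is normal and non-abelian, hence G,
   so [~: A, <[x]>] = A and coprime action gives 'C_A(<[x]>) = 1.
   Conversely, let H be a non-abelian subgroup and Q a Sylow p-subgroup of H.  If Q
   were a proper subgroup of a conjugate of <[x]>, it would lie in the central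
   <[x ^+ p]>, and H in the abelian A <*> <[x ^+ p]>.  So Q is a Sylow subgroup
   of G, self-normalizing because 'C_A(<[x]>) = 1, and the Frattini argument
   gives 'N_G(H) = H. *)

Section GroupFacts.
Variable gT : finGroupType.
Implicit Types (G H K Q Z : {group gT}) (A : {set gT}).

Lemma nonnilpotent_nonnormal_Sylow G :
  ~~ nilpotent G -> exists p (P : {group gT}), [/\ prime p, p.-Sylow(G) P & ~~ (P <| G)].
Proof.
move=> nnilG.
have [P /andP[sylP nnP] | allN] := pickP [pred P : {group gT} | Sylow G P && ~~ (P <| G)].
  by case/SylowP: sylP => p pr_p sylP; exists p, P.
case/negP: nnilG; apply: nilpotentS (Fitting_nil G).
rewrite -{1}(Sylow_gen G) gen_subG; apply/bigcupsP => P sylP.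
have nsPG : P <| G by apply/negbFE; have := allN P; rewrite /= sylP.
by apply: Fitting_max nsPG _; case/SylowP: sylP => p _ /pHall_pgroup/pgroup_nil.
Qed.

Lemma mulg_capr_trivial A H K : A :&: H = 1 -> K \subset H -> A * K :&: H = K.
Proof. by move=> tiAH sKH; rewrite setIC -group_modr // setIC tiAH mul1g. Qed.

Lemma cent_cycle_eq1 H (x : gT) :
  'C_H(<[x]>) = 1 <-> (forall a, a \in H -> a ^ x = a -> a = 1).
Proof.
rewrite cent_cycle; split=> [cHx1 a Ha ax_a | fixH].
  by apply/set1gP; rewrite -cHx1 inE Ha; apply/cent1P/commgP/conjg_fixP.
apply/trivgP/subsetP => a /setIP[Ha /cent1P/commgP/conjg_fixP ax_a].
by rewrite inE (fixH a).
Qed.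

Lemma cycle_pgroup_proper_subX p (y : gT) Q :
  prime p -> p.-group <[y]> -> Q \subset <[y]> -> Q :!=: <[y]> -> Q \subset <[y ^+ p]>.
Proof.
move=> pr_p py sQy neQy.
have [q defQ] := cyclicP (cyclicS sQy (cycle_cyclic y)).
have /cycleP[i defq] : q \in <[y]> by rewrite (subsetP sQy) // defQ cycle_id.
rewrite defQ defq cycle_subG.
have [/dvdnP[k ->] | p'i] := boolP (p %| i); first by rewrite mulnC expgM mem_cycle.
case/negP: neQy; rewrite eqEcard sQy defQ defq -!orderE orderXgcd.
have /eqP-> : coprime #[y] i by apply: pnat_coprime py _; rewrite p'natE.
by rewrite divn1 /=.
Qed.

(* Frattini argument: 'N_G(H) = H * 'N_{'N_G(H)}(Q). *)
Lemma Sylow_norm_sub_self_normalizing p G H Q :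
  H \subset G -> p.-Sylow(H) Q -> 'N_G(Q) \subset H -> 'N_G(H) = H.
Proof.
move=> sHG sylQ sNQH; apply/eqP; rewrite eqEsubset subsetI sHG normG andbT.
rewrite -{1}(Frattini_arg (normalSG sHG) sylQ) mul_subG //.
exact: subset_trans (setSI _ (subsetIl G _)) sNQH.
Qed.

Lemma sub_normal_Hall_join_Sylow (p : nat) G H K Q Z :
  p^'.-Hall(G) K -> K <| G -> H \subset G -> p.-Sylow(H) Q ->
  Q \subset Z -> H \subset 'N(Z) -> H \subset K <*> Z.
Proof.
move=> hallK nsKG sHG sylQ sQZ nZH.
rewrite -(Sylow_gen H) gen_subG; apply/bigcupsP => R /SylowP[r pr_r sylR].
have [erp | r'p] := eqVneq r p.
  subst r; have [h Hh ->] := Sylow_trans sylQ sylR.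
  by rewrite (subset_trans _ (joing_subr _ _)) // -(normsP nZH h Hh) conjSg.
apply: subset_trans (joing_subl _ _).
rewrite (sub_normal_Hall hallK nsKG) ?(subset_trans (pHall_sub sylR)) //.
apply: sub_pgroup (pHall_pgroup sylR) => q /eqnP-> /=.
by rewrite inE /= r'p.
Qed.

End GroupFacts.

Section Yn.
Variables (gT : finGroupType) (G : {group gT}).
Hypothesis YG : Yn G.

Lemma Yn_normal_nonabelian (H : {group gT}) :
  H \subset G -> G \subset 'N(H) -> ~~ abelian H -> H :=: G.
Proof. by move=> sHG nHG /(YG sHG) <-; rewrite (setIidPl nHG). Qed.

Lemma Yn_normal_proper_abelian (H : {group gT}) : H <| G -> H \proper G -> abelian H.
Proof.
case/andP=> sHG nHG prHG; apply/negPn/negP => nabH.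
by move: prHG; rewrite (Yn_normal_nonabelian sHG nHG nabH) properxx.
Qed.

Lemma Yn_der1_abelian : solvable G -> abelian G^`(1).
Proof.
move=> solG; have [-> | ntG] := eqsVneq G 1; first by rewrite derg1 commG1 abelian1.
exact: Yn_normal_proper_abelian (der_normal 1 G) (sol_der1_proper solG (subxx G) ntG).
Qed.

Lemma Yn_norm_cycle_mulg (A : {group gT}) y g :
  A <| G -> y \in G -> y \notin 'C(A) -> g \in 'N_G(<[y]>) -> g \in A * <[y]>.
Proof.
case/andP=> sAG nAG Gy nCy /setIP[Gg Ngy].
have nAy : <[y]> \subset 'N(A) by rewrite cycle_subG (subsetP nAG).
have sLG : A <*> <[y]> \subset G by rewrite join_subG sAG cycle_subG.
have nabL : ~~ abelian (A <*> <[y]>).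
  by rewrite abelianY cycle_abelian cycle_subG (negbTE nCy) /= andbF.
rewrite -(norm_joinEr nAy) -(YG sLG nabL) inE Gg -cycle_subG normsY //.
  by rewrite cycle_subG (subsetP nAG).
by rewrite cycle_subG.
Qed.

Lemma Yn_sdprod_cycle (A P : {group gT}) x :
  A ><| P = G -> nilpotent P -> x \in P -> x \notin 'C(A) -> <[x]> = P.
Proof.
move=> sdAP nilP Px nCx; have [nsAG sPG _ _ tiAP] := sdprod_context sdAP.
have sxP : <[x]> \subset P by rewrite cycle_subG.
apply/eqP; rewrite eqEproper sxP /=; apply/negP => prxP.
have [_ [n /setIP[Pn Nxn] x'n]] := properP (nilpotent_proper_norm nilP prxP).
case/negP: x'n; rewrite -(mulg_capr_trivial tiAP sxP) inE Pn andbT.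
by apply: Yn_norm_cycle_mulg nsAG (subsetP sPG x Px) nCx _; rewrite inE (subsetP sPG).
Qed.

Section CyclicComplement.
Variables (A : {group gT}) (x : gT).
Hypothesis sdAx : A ><| <[x]> = G.

Lemma Yn_sdprod_expg_center (p : nat) : p.-group <[x]> -> x ^+ p \in 'Z(G).
Proof.
move=> px; have [nsAG sxG defG _ tiAx] := sdprod_context sdAx.
have Gx : x \in G by rewrite -cycle_subG.
have cAxp : x ^+ p \in 'C(A).
  apply/negPn/negP => nCxp.
  have ntx : <[x]> != 1.
    by rewrite cycle_eq1; apply: contraNneq nCxp => ->; rewrite expg1n group1.
  have [pr_p p_dv_x _] := pgroup_pdiv px ntx.
  have xAxp : x \in A * <[x ^+ p]>.
    apply: Yn_norm_cycle_mulg nsAG (groupX p Gx) nCxp _.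
    rewrite inE Gx -cycle_subG.
    by apply: sub_abelian_norm (cycle_abelian x) _; rewrite cycleX.
  have: x \in <[x ^+ p]>.
    by rewrite -(mulg_capr_trivial tiAx (cycleX x p)) inE xAxp cycle_id.
  rewrite -cycle_subG => /subset_leq_card; rewrite -!orderE orderXdiv //.
  by rewrite leqNgt ltn_Pdiv ?prime_gt1 ?order_gt0.
rewrite inE groupX // -defG centM inE cAxp.
exact: subsetP (cycle_abelian x) _ (mem_cycle x p).
Qed.

Lemma Yn_sdprod_commg_cycle :
  abelian A -> coprime #|A| #[x] -> x \notin 'C(A) -> [~: A, <[x]>] = A.
Proof.
move=> abA coAx nCx; have [nsAG _ defG nAx tiAx] := sdprod_context sdAx.
have sBA : [~: A, <[x]>] \subset A by rewrite commg_subl.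
have nBA : A \subset 'N([~: A, <[x]>]) := sub_abelian_norm abA sBA.
have nBx : <[x]> \subset 'N([~: A, <[x]>]) := commg_normr _ _.
have nabH : ~~ abelian ([~: A, <[x]>] <*> <[x]>).
  apply: contra nCx; rewrite abelianY => /and3P[_ _ cBx].
  have cAx1 : [~: A, <[x]>] = 1.
    rewrite -(coprime_abel_cent_TI nAx coAx abA); apply/esym/setIidPl.
    by rewrite centsC.
  by rewrite -cycle_subG centsC; apply/commG1P.
have nHA : A \subset 'N([~: A, <[x]>] <*> <[x]>).
  apply/subsetP => a Aa; rewrite inE conjYg (normP (subsetP nBA a Aa)) -cycleJ.
  rewrite join_subG joing_subl cycle_subG conjg_mulR groupM //.
    exact: subsetP (joing_subr _ _) x (cycle_id x).
  by apply: subsetP (joing_subl _ _) _ _; rewrite commGC mem_commg ?cycle_id.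
have sHG : [~: A, <[x]>] <*> <[x]> \subset G.
  by rewrite join_subG (subset_trans sBA (normal_sub nsAG)) -defG mulG_subr.
have nHG : G \subset 'N([~: A, <[x]>] <*> <[x]>).
  by rewrite -defG mul_subG // (subset_trans (joing_subr _ _) (normG _)).
have defH := Yn_normal_nonabelian sHG nHG nabH.
have sAxB : A \subset <[x]> * [~: A, <[x]>].
  by rewrite (normC nBx) -(norm_joinEr nBx) defH normal_sub.
by rewrite -(@mulg_capr_trivial _ <[x]> _ _ _ sBA) ?(setIidPr sAxB) // setIC.
Qed.

Lemma Yn_sdprod_cent_cycle_trivial :
  abelian A -> coprime #|A| #[x] -> x \notin 'C(A) -> 'C_A(<[x]>) = 1.
Proof.
move=> abA coAx nCx; have [_ _ _ nAx _] := sdprod_context sdAx.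
by rewrite -{1}(Yn_sdprod_commg_cycle abA coAx nCx) coprime_abel_cent_TI.
Qed.

End CyclicComplement.

Section SylowComplement.
Variables (p : nat) (P : {group gT}).
Hypotheses (solG : solvable G) (sylP : p.-Sylow(G) P) (nnP : ~~ (P <| G)).

(* A proper P <*> G^`(1) would be abelian, with P as a characteristic subgroup. *)
Lemma Yn_Sylow_mul_der1 : P * G^`(1) = G.
Proof.
have sPG := pHall_sub sylP; have nsDG := der_normal 1 G.
have sJG : P <*> G^`(1) \subset G by rewrite join_subG sPG der_sub.
have nsJG : P <*> G^`(1) <| G := sub_der1_normal (joing_subr _ _) sJG.
rewrite -norm_joinEl ?(subset_trans sPG (normal_norm nsDG)) //; apply/eqP.
rewrite eqEproper sJG /=; apply: contra nnP => prJ.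
have nilJ := abelian_nil (Yn_normal_proper_abelian nsJG prJ).
rewrite (nilpotent_Hall_pcore nilJ (pHall_subl (joing_subl _ _) sJG sylP)).
exact: char_normal_trans (pcore_char _ _) nsJG.
Qed.

Lemma Yn_sdprod_pcore_der1 : 'O_p^'(G^`(1)) ><| P = G.
Proof.
have abD := Yn_der1_abelian solG; have sPG := pHall_sub sylP.
have nsAG : 'O_p^'(G^`(1)) <| G := char_normal_trans (pcore_char _ _) (der_normal 1 G).
have sOpP : 'O_p(G^`(1)) \subset P.
  apply: normal_sub_max_pgroup (Hall_max sylP) (pcore_pgroup _ _) _.
  exact: char_normal_trans (pcore_char _ _) (der_normal 1 G).
have nAP := subset_trans sPG (normal_norm nsAG).
rewrite sdprodE ?coprime_TIg //; last first.
  by rewrite coprime_sym (pnat_coprime (pHall_pgroup sylP) (pcore_pgroup _ _)).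
have eG := Yn_Sylow_mul_der1.
rewrite -(dprodW (nilpotent_pcoreC p (abelian_nil abD))) mulgA (mulGSid sOpP) in eG.
by rewrite -(normC nAP).
Qed.

End SylowComplement.
End Yn.

Section FixedPointFreeComplement.
Variables (gT : finGroupType) (G A : {group gT}) (x : gT) (p : nat).
Hypotheses (px : p.-group <[x]>) (p'A : p^'.-group A) (sdAx : A ><| <[x]> = G).

Lemma sdprod_cycle_Sylow : p.-Sylow(G) <[x]>.
Proof.
have [_ sxG _ _ _] := sdprod_context sdAx.
by rewrite /pHall sxG px -divgS // -(sdprod_card sdAx) mulnK ?cardG_gt0.
Qed.

Lemma sdprod_pcompl_Hall : p^'.-Hall(G) A.
Proof.
have [nsAG _ _ _ _] := sdprod_context sdAx.
by rewrite /pHall normal_sub // p'A -(index_sdprod sdAx) pnatNK.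
Qed.

Lemma sdprod_norm_cycle_sub : 'C_A(<[x]>) = 1 -> 'N_G(<[x]>) \subset <[x]>.
Proof.
move=> cAx1; have [_ _ defG nAx _] := sdprod_context sdAx.
have coAx : coprime #|A| #|<[x]>| by rewrite coprime_sym (pnat_coprime px).
by rewrite -defG setIC -group_modr ?normG // setIC coprime_norm_cent // cAx1 mul1g.
Qed.

Lemma sdprod_fpf_Yn :
  prime p -> abelian A -> x ^+ p \in 'Z(G) -> 'C_A(<[x]>) = 1 -> Yn G.
Proof.
move=> pr_p abA /setIP[_ cGxp] cAx1 H sHG nabH.
have [nsAG _ _ _ _] := sdprod_context sdAx.
have [Q sylQ] := Sylow_exists p H; have sQH := pHall_sub sylQ.
have [S sylS sQS] := Sylow_superset (subset_trans sQH sHG) (pHall_pgroup sylQ).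
have [g Gg defS] := Sylow_trans sdprod_cycle_Sylow sylS.
have [defQ | neQS] := eqVneq (Q : {set gT}) S.
  apply: Sylow_norm_sub_self_normalizing sHG sylQ (subset_trans _ sQH).
  rewrite defQ defS -{1}(conjGid Gg) normJ -conjIg conjSg.
  exact: sdprod_norm_cycle_sub.
have xpg : (x ^ g) ^+ p = x ^+ p.
  by rewrite -conjXg; apply/conjg_fixP/commgP; apply: (centP cGxp).
have sQxp : Q \subset <[x ^+ p]>.
  rewrite -xpg; apply: cycle_pgroup_proper_subX pr_p _ _ _; rewrite cycleJ -defS //.
  exact: pHall_pgroup sylS.
have cHxp : H \subset 'C(<[x ^+ p]>) by rewrite centsC cycle_subG (subsetP (centS sHG)).
have sHAxp := sub_normal_Hall_join_Sylow sdprod_pcompl_Hall nsAG sHG sylQ sQxp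
  (cents_norm cHxp).
case/negP: nabH; apply: abelianS sHAxp _.
by rewrite abelianY abA cycle_abelian cycle_subG (subsetP (centS (normal_sub nsAG))).
Qed.

End FixedPointFreeComplement.

Theorem theorem2p13 (gT : finGroupType) (G : {group gT}) :
  solvable G -> ~~ nilpotent G ->
  (Yn G <->
   exists (x : gT) (p : nat) (A : {group gT}),
     [/\ prime p, p.-group <[x]>, A ><| <[x]> = G & abelian A] /\
     [/\ p^'.-group A, x ^+ p \in 'Z(G)
       & forall a, a \in A -> a ^ x = a -> a = 1]).
Proof.
move=> solG nnilG; split=> [YG | [x [p [A [[pr_p px sdAx abA] [p'A xpZ fixA]]]]]].
  have [p [P [pr_p sylP nnP]]] := nonnilpotent_nonnormal_Sylow nnilG.
  have sdAP := Yn_sdprod_pcore_der1 YG solG sylP nnP.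
  have [x Px nCx] : exists2 x, x \in P & x \notin 'C('O_p^'(G^`(1))).
    apply/subsetPn; apply: contra nnP => cAP.
    by case/dprod_normal2: (etrans (dprodEsd cAP) sdAP).
  have pP := pHall_pgroup sylP.
  have defP := Yn_sdprod_cycle YG sdAP (pgroup_nil pP) Px nCx.
  rewrite -defP in sdAP pP.
  have p'A : p^'.-group 'O_p^'(G^`(1)) := pcore_pgroup _ _.
  have abA : abelian 'O_p^'(G^`(1)) := abelianS (pcore_sub _ _) (Yn_der1_abelian YG solG).
  have coAx : coprime #|'O_p^'(G^`(1))| #[x] by rewrite coprime_sym (pnat_coprime pP).
  exists x, p, 'O_p^'(G^`(1)); split; split=> //.
    exact: (Yn_sdprod_expg_center YG sdAP pP).
  apply/cent_cycle_eq1; exact: (Yn_sdprod_cent_cycle_trivial YG sdAP abA coAx nCx).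
apply: sdprod_fpf_Yn px p'A sdAx pr_p abA xpZ _.
exact/cent_cycle_eq1.
Qed.
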